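(* For all $x\ge y\ge 1$ and $n>x+y$, the maximum possible number of edges in any $(x,y)$ task-dependency graph of order $n$ produced by the $(x,y)$ edge-addition process is $\binom{n}{2}+1-\binom{x}{2}-\binom{y+1}{2}$.
   Context: A task-dependency graph is a finite directed acyclic graph (no loops, no multiple edges). A vertex is initial if it has in-degree $0$ and terminal if it has out-degree $0$ (an isolated vertex is both). An $(x,y)$ task-dependency graph has exactly $x$ initial and exactly $y$ terminal vertices. The $(x,y)$ edge-addition process on $n$ vertices: start with the empty graph on $\{1,\dots,n\}$ and repeatedly add, uniformly at random, an edge $(a,b)$ with $a<b$ not yet present; if an addition would cause fewer than $x$ initial vertices or fewer than $y$ terminal vertices, it is cancelled. The process halts if the graph after some edge addition is an $(x,y)$ task-dependency graph, or if no more edges can be added; the produced graph is the final graph (over all possible runs). *)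

From mathcomp Require Import all_boot.
Set Implicit Arguments. Unset Strict Implicit. Unset Printing Implicit Defensive.

(* A graph on the vertex set 'I_n (standing for {1,...,n}, order preserved)
   is a set of directed edges (a,b).  Graphs built by the process only
   contain edges with a < b, hence are acyclic without loops/multi-edges. *)
Definition graph (n : nat) := {set 'I_n * 'I_n}.

Definition is_initial n (E : graph n) (v : 'I_n) : bool :=
  [forall u : 'I_n, (u, v) \notin E].
Definition is_terminal n (E : graph n) (v : 'I_n) : bool :=
  [forall w : 'I_n, (v, w) \notin E].

Definition n_initial n (E : graph n) : nat := #|[set v | is_initial E v]|.
Definition n_terminal n (E : graph n) : nat := #|[set v | is_terminal E v]|.

Definition is_xy_graph n (x y : nat) (E : graph n) : bool :=
  (n_initial E == x) && (n_terminal E == y).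

Definition valid_addition n (x y : nat) (E : graph n) (a b : 'I_n) : bool :=
  [&& (a < b)%N, (a, b) \notin E,
      x <= n_initial ((a, b) |: E) & y <= n_terminal ((a, b) |: E)].

(* Graphs that can occur during some run of the (x,y) edge-addition
   process: the process has not halted yet (the current graph is not an
   (x,y) graph) when the next legal edge is added. *)
Inductive reachable n (x y : nat) : graph n -> Prop :=
| reach_empty : reachable x y set0
| reach_step (E : graph n) (a b : 'I_n) :
    reachable x y E -> ~~ is_xy_graph x y E -> valid_addition x y E a b ->
    reachable x y ((a, b) |: E).

Definition produced n (x y : nat) (E : graph n) : Prop :=
  reachable x y E /\
  (is_xy_graph x y E \/ forall a b : 'I_n, ~~ valid_addition x y E a b).

From mathcomp Require Import all_boot zify.
Set Implicit Arguments. Unset Strict Implicit. Unset Printing Implicit Defensive.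

(* Let E be a final (x,y) graph with initial set I, terminal set T, k = |I ∩ T|
   and m = n - |I ∪ T| > k.  Every edge goes from a non-terminal to a
   non-initial vertex, and as edges increase, distinct edges span distinct
   unordered pairs.  Hence no edge spans a pair inside I, inside T, or joining
   I ∩ T to the complement of I ∪ T: that rules out
   C(x,2) + C(y,2) - C(k,2) + k m pairs.  The last edge (a,b) was needed to
   reach an (x,y) graph, so it is the only out-edge of a or the only in-edge
   of b; then a is adjacent to no vertex of T \ I but b, resp. b to no vertex
   of I \ T but a, which rules out y - k - 1 more pairs (using x >= y).  Since
   k m >= C(k+1,2), the bound follows.  It is attained by adding, in any
   order, all edges (u,v) with u < v, u < n-y-1 and x <= v, then the edge
   (n-y-1, n-y) (vertices are numbered from 0). *)

Section Pairs.

Variable n : nat.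
Implicit Types (A B S : {set 'I_n}) (u v w : 'I_n).

Definition ends (p : 'I_n * 'I_n) : {set 'I_n} := [set p.1; p.2].

Definition pairs_in S : {set {set 'I_n}} := [set A : {set 'I_n} | A \subset S & #|A| == 2].

Lemma card_pairs_in S : #|pairs_in S| = 'C(#|S|, 2).
Proof. exact: cards_draws. Qed.

Lemma pairs_inI S1 S2 : pairs_in S1 :&: pairs_in S2 = pairs_in (S1 :&: S2).
Proof. by apply/setP => A; rewrite !inE subsetI andbACA andbb. Qed.

Lemma subset_pair u v S : ([set u; v] \subset S) = (u \in S) && (v \in S).
Proof. by rewrite subUset !sub1set. Qed.

Lemma disjoint_pair u v S : [disjoint [set u; v] & S] = (u \notin S) && (v \notin S).
Proof. by rewrite disjoints_subset subset_pair !inE. Qed.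

Lemma pair_in_pairs_inT u v : u != v -> [set u; v] \in pairs_in setT.
Proof. by move=> uv; rewrite inE subsetT cards2 uv. Qed.

Lemma pairs_inT_sorted A : A \in pairs_in setT -> exists u v, u < v /\ A = [set u; v].
Proof.
rewrite inE subsetT => /cards2P [u [v [uv ->]]].
case: (ltngtP u v) => [lt_uv | lt_vu | eq_uv]; first by exists u, v.
- by exists v, u; rewrite setUC.
- by move: uv; rewrite (val_inj eq_uv) eqxx.
Qed.

Lemma eq_ends (p q : 'I_n * 'I_n) : ends p = ends q -> p = q \/ p = (q.2, q.1).
Proof.
case: p q => [u v] [u' v'] /setP e.
move: (e u) (e v) (esym (e u')) (esym (e v')); rewrite !inE !eqxx ?orbT.
by do 4 case/esym/orP => /eqP ->; by [left | right].
Qed.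

Lemma ends_lt_inj (D : {set 'I_n * 'I_n}) :
  (forall u v, (u, v) \in D -> u < v) -> {in D &, injective ends}.
Proof.
move=> ltD [u v] [u' v'] /ltD lt_uv /ltD lt_uv' /eq_ends [//|[eu ev]].
by move: lt_uv; rewrite eu ev ltnNge ltnW.
Qed.

Lemma card_ends_setX A B : [disjoint A & B] -> #|ends @: setX A B| = #|A| * #|B|.
Proof.
move=> dAB; rewrite card_in_imset ?cardsX // => -[u v] [u' v'].
rewrite !in_setX /= => /andP[uA _] /andP[_ v'B] /eq_ends [//|[eu _]].
by rewrite -eu (disjointFr dAB uA) in v'B.
Qed.

Lemma card_ord_lt c : c <= n -> #|[set v : 'I_n | v < c]| = c.
Proof.
move=> cn; have widen_inj : injective (widen_ord cn) by move=> i j [] /val_inj.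
rewrite -[RHS]card_ord -(card_imset _ widen_inj).
apply: eq_card => v; rewrite inE; apply/idP/imsetP => [vc | [w _ ->]]; last exact: (ltn_ord w).
by exists (Ordinal vc); last by apply: val_inj.
Qed.

Lemma card_ord_ge c : c <= n -> #|[set v : 'I_n | c <= v]| = n - c.
Proof.
move=> cn; have := cardsC [set v : 'I_n | v < c]; rewrite card_ord (card_ord_lt cn).
have -> : ~: [set v : 'I_n | v < c] = [set v : 'I_n | c <= v].
  by apply/setP => v; rewrite !inE -leqNgt.
lia.
Qed.

End Pairs.

Arguments ends {n} p.

Section Admissible.

Variables (n : nat) (I T : {set 'I_n}).

(* The 2-sets that can carry an edge from a vertex outside T to a vertex
   outside I. *)
Definition admissible (A : {set 'I_n}) : bool :=
  [&& ~~ (A \subset I), ~~ (A \subset T) & [disjoint A & I :&: T]].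

Lemma card_admissible (P : {set {set 'I_n}}) :
  P \subset pairs_in setT -> {in P, forall A, admissible A} ->
  #|P| + 'C(#|I|, 2) + 'C(#|T|, 2) + #|I :&: T| * #|~: (I :|: T)|
    <= 'C(n, 2) + 'C(#|I :&: T|, 2).
Proof.
move=> sPU admP.
set U := pairs_in [set: 'I_n]; set K := I :&: T; set M := ~: (I :|: T).
set F1 := pairs_in I :|: pairs_in T; set F2 := ends @: setX K M.
have dKM : [disjoint K & M] by rewrite disjoints_subset setCK subIset ?subsetUl.
have cardF1 : #|F1| + 'C(#|K|, 2) = 'C(#|I|, 2) + 'C(#|T|, 2).
  by rewrite -!card_pairs_in -pairs_inI cardsUI.
have sF1U : F1 \subset U.
  by rewrite subUset; apply/andP; split; apply/subsetP => A; rewrite !inE subsetT => /andP[].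
have sF2U1 : F2 \subset U :\: F1.
  apply/subsetP => _ /imsetP[[u v] /setXP[uK vM] ->].
  have uv : u != v by apply: contraTneq vM => <-; rewrite (disjointFr dKM uK).
  move: vM; rewrite /ends /= !inE !subset_pair !inE cards2 uv.
  by case/norP => /negbTE-> /negbTE->; rewrite !andbF.
have sP12 : P \subset (U :\: F1) :\: F2.
  apply/subsetP => A PA; have /and3P[AI AT AK] := admP A PA.
  move: (subsetP sPU A PA); rewrite !inE (negbTE AI) (negbTE AT) /= => ->.
  rewrite andbT; apply/imsetP => -[[u v] /setXP[uK _] eA].
  by move: AK; rewrite eA disjoint_pair uK.
have := subset_leq_card sP12.
have := subset_leq_card sF1U; have := subset_leq_card sF2U1.
rewrite !cardsD (setIidPr sF2U1) (setIidPr sF1U) card_ends_setX //.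
rewrite card_pairs_in cardsT card_ord.
lia.
Qed.

End Admissible.

Lemma admissibleC n (I T : {set 'I_n}) : admissible I T =1 admissible T I.
Proof. by move=> A; rewrite /admissible setIC andbCA. Qed.

Lemma admissible_pair n (I T : {set 'I_n}) c w :
  c \notin T -> w \in T :\: I -> admissible I T [set c; w].
Proof.
move=> cT /setDP[wT wI].
by rewrite /admissible !subset_pair disjoint_pair !inE (negbTE cT) (negbTE wI) !andbF.
Qed.

Section Graphs.

Variable n : nat.
Implicit Types (E : graph n) (a b c u v w : 'I_n) (S : {set 'I_n}).

Definition initials E : {set 'I_n} := [set v | is_initial E v].
Definition terminals E : {set 'I_n} := [set v | is_terminal E v].

Lemma is_initialU1 E a b v : is_initial ((a, b) |: E) v = (v != b) && is_initial E v.
Proof.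
apply/forallP/andP => [inV | [vb /forallP inV] u].
  split; last by apply/forallP => u; have := inV u; rewrite in_setU1 negb_or => /andP[].
  by apply/eqP => vb; move: (inV a); rewrite vb setU11.
by rewrite in_setU1 negb_or inV andbT; apply: contra_neq vb => -[_ ->].
Qed.

Lemma is_terminalU1 E a b v : is_terminal ((a, b) |: E) v = (v != a) && is_terminal E v.
Proof.
apply/forallP/andP => [outV | [va /forallP outV] u].
  split; last by apply/forallP => u; have := outV u; rewrite in_setU1 negb_or => /andP[].
  by apply/eqP => va; move: (outV b); rewrite va setU11.
by rewrite in_setU1 negb_or outV andbT; apply: contra_neq va => -[->].
Qed.

Lemma n_initialU1 E a b : ~~ is_initial E b -> n_initial ((a, b) |: E) = n_initial E.
Proof.
move=> bI; apply: eq_card => v; rewrite !inE is_initialU1.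
by case: eqP => // ->; rewrite (negbTE bI).
Qed.

Lemma n_terminalU1 E a b : ~~ is_terminal E a -> n_terminal ((a, b) |: E) = n_terminal E.
Proof.
move=> aT; apply: eq_card => v; rewrite !inE is_terminalU1.
by case: eqP => // ->; rewrite (negbTE aT).
Qed.

Lemma n_initial0 : n_initial (set0 : graph n) = n.
Proof.
rewrite -[RHS]card_ord -cardsT; apply: eq_card => v.
by rewrite !inE; apply/forallP => u; rewrite inE.
Qed.

Lemma leq_n_initial E (c : nat) :
  c <= n -> (forall u v, (u, v) \in E -> c <= v) -> c <= n_initial E.
Proof.
move=> cn heads; rewrite -{1}(card_ord_lt cn); apply/subset_leq_card/subsetP => v.
by rewrite !inE => vc; apply/forallP => u; apply: contraTN vc => /heads; rewrite -leqNgt.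
Qed.

Lemma leq_n_terminal E (c : nat) :
  c <= n -> (forall u v, (u, v) \in E -> u < c) -> n - c <= n_terminal E.
Proof.
move=> cn tails; rewrite -(card_ord_ge cn); apply/subset_leq_card/subsetP => v.
by rewrite !inE => cv; apply/forallP => w; apply: contraTN cv => /tails; rewrite -ltnNge.
Qed.

Lemma edge_notin_terminals E u v : (u, v) \in E -> u \notin terminals E.
Proof. by move=> uvE; rewrite inE; apply/forallPn; exists v; rewrite negbK. Qed.

Lemma edge_notin_initials E u v : (u, v) \in E -> v \notin initials E.
Proof. by move=> uvE; rewrite inE; apply/forallPn; exists u; rewrite negbK. Qed.

Lemma private_out_edge E a b w :
  is_terminal E a -> w != b -> w \in terminals ((a, b) |: E) ->
  ((a, w) \notin (a, b) |: E) && ((w, a) \notin (a, b) |: E).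
Proof.
move=> /forallP aT wb; rewrite inE => /forallP wT.
by rewrite wT andbT in_setU1 negb_or aT andbT xpair_eqE eqxx.
Qed.

Lemma private_in_edge E a b w :
  is_initial E b -> w != a -> w \in initials ((a, b) |: E) ->
  ((b, w) \notin (a, b) |: E) && ((w, b) \notin (a, b) |: E).
Proof.
move=> /forallP bI wa; rewrite inE => /forallP wI.
by rewrite wI /= in_setU1 negb_or bI andbT xpair_eqE eqxx andbT.
Qed.

Lemma admissible_ends E u v :
  (u, v) \in E -> admissible (initials E) (terminals E) (ends (u, v)).
Proof.
move=> uvE; move: (edge_notin_terminals uvE) (edge_notin_initials uvE).
rewrite /admissible /ends /= !subset_pair disjoint_pair !inE => /negbTE-> /negbTE->.
by rewrite !andbF.
Qed.

Lemma card_edges_saving E c S :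
  (forall u v, (u, v) \in E -> u < v) -> c \notin S ->
  {in S, forall w, admissible (initials E) (terminals E) [set c; w]} ->
  {in S, forall w, ((c, w) \notin E) && ((w, c) \notin E)} ->
  #|E| + #|S| + 'C(n_initial E, 2) + 'C(n_terminal E, 2)
    + #|initials E :&: terminals E| * #|~: (initials E :|: terminals E)|
    <= 'C(n, 2) + 'C(#|initials E :&: terminals E|, 2).
Proof.
move=> ltE cS admS freeS.
set P1 := ends @: E; set P2 := ends @: setX [set c] S.
have cardP1 : #|P1| = #|E| by rewrite card_in_imset //; apply: ends_lt_inj.
have cardP2 : #|P2| = #|S| by rewrite card_ends_setX ?cards1 ?mul1n ?disjoints1.
have dP : [disjoint P1 & P2].
  apply/pred0P => A /=; apply/negP => /andP[/imsetP[p pE ->]].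
  case/imsetP => -[c' w] /setXP[/set1P -> wS] /eq_ends eq_p.
  have /andP[cwE wcE] := freeS w wS.
  by case: eq_p pE => /= ->; apply/negP.
have := @card_admissible n (initials E) (terminals E) (P1 :|: P2).
rewrite cardsU (disjoint_setI0 dP) cards0 subn0 cardP1 cardP2; apply.
  apply/subsetP => _ /setUP[/imsetP[[u v] uvE ->] | /imsetP[[c' w] /setXP[/set1P -> wS] ->]].
    by apply: pair_in_pairs_inT; rewrite neq_ltn ltE.
  by apply: pair_in_pairs_inT => /=; apply: contraNneq cS => ->.
move=> _ /setUP[/imsetP[[u v] uvE ->] | /imsetP[[c' w] /setXP[/set1P -> wS] ->]].
  exact: admissible_ends.
exact: admS.
Qed.

End Graphs.

Section Process.

Variables (n x y : nat).
Implicit Types (E : graph n) (a b u v w : 'I_n).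

Lemma reachable_lt E : reachable x y E -> forall u v, (u, v) \in E -> u < v.
Proof.
elim => [|E' a b _ IH _ /and4P[ab _ _ _]] u v; first by rewrite inE.
by rewrite in_setU1 => /orP[/eqP[-> ->] // | /IH].
Qed.

Lemma xy_graph_last_edge E a b :
  ~~ is_xy_graph x y E -> is_xy_graph x y ((a, b) |: E) ->
  is_terminal E a || is_initial E b.
Proof.
move=> notxy; apply: contraLR => /norP[aT bI].
by rewrite /is_xy_graph n_initialU1 ?n_terminalU1.
Qed.

Lemma xy_graph_saving E :
  y <= x -> x < n -> reachable x y E -> is_xy_graph x y E ->
  exists c (S : {set 'I_n}), [/\ c \notin S,
    {in S, forall w, admissible (initials E) (terminals E) [set c; w]},
    {in S, forall w, ((c, w) \notin E) && ((w, c) \notin E)} &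
    y <= #|S| + #|initials E :&: terminals E| + 1].
Proof.
move=> yx xn rE; case: rE => [|E0 a b _ notxy _] xyE.
  by move: xyE => /andP[]; rewrite n_initial0 gtn_eqF.
set G := (a, b) |: E0.
have /andP[/eqP cardI /eqP cardT] : (#|initials G| == x) && (#|terminals G| == y) := xyE.
have abG : (a, b) \in G := setU11 _ _.
have cardD (A B : {set 'I_n}) c : #|A| <= #|(A :\: B) :\ c| + #|B :&: A| + 1.
  have := cardsD1 c (A :\: B); have := subset_leq_card (subsetIr B A).
  by rewrite cardsD setIC; case: (_ \in _); lia.
case/orP: (xy_graph_last_edge notxy xyE) => [aT0 | bI0].
- have aT := edge_notin_terminals abG.
  exists a, ((terminals G :\: initials G) :\ b); split.
  + by rewrite in_setD1 in_setD (negbTE aT) !andbF.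
  + by move=> w /setD1P[_ wTI]; apply: admissible_pair.
  + by move=> w /setD1P[wb /setDP[wT _]]; apply: private_out_edge.
  + by rewrite -cardT cardD.
- have bI := edge_notin_initials abG.
  exists b, ((initials G :\: terminals G) :\ a); split.
  + by rewrite in_setD1 in_setD (negbTE bI) !andbF.
  + by move=> w /setD1P[_ wIT]; rewrite admissibleC; apply: admissible_pair.
  + by move=> w /setD1P[wa /setDP[wI _]]; apply: private_in_edge.
  + by rewrite (leq_trans yx) // -cardI setIC cardD.
Qed.

End Process.

Lemma binomial_saving_bound e s x y k m N :
  k < m -> y <= s + k + 1 ->
  e + s + 'C(x, 2) + 'C(y, 2) + k * m <= 'C(N, 2) + 'C(k, 2) ->
  e <= 'C(N, 2) + 1 - 'C(x, 2) - 'C(y.+1, 2).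
Proof.
move=> km ys; have := mul_bin_diag k.+1 1; rewrite binS bin1 /= => triangle.
have : k.+1 * k <= m * k by rewrite leq_mul2r km orbT.
have : 'C(y.+1, 2) = 'C(y, 2) + y by rewrite binS bin1.
lia.
Qed.

Lemma card_xy_graph_le n x y (E : graph n) :
  y <= x -> x + y < n -> reachable x y E -> is_xy_graph x y E ->
  #|E| <= 'C(n, 2) + 1 - 'C(x, 2) - 'C(y.+1, 2).
Proof.
move=> yx xyn rE xyE.
have xn : x < n by apply: leq_ltn_trans xyn; apply: leq_addr.
have [c [S [cS admS freeS yS]]] := xy_graph_saving yx xn rE xyE.
have /andP[/eqP cardI /eqP cardT] := xyE.
have := card_edges_saving (reachable_lt rE) cS admS freeS; rewrite cardI cardT.
have := cardsC (initials E :|: terminals E); have := cardsUI (initials E) (terminals E).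
rewrite [#|initials E|]cardI [#|terminals E|]cardT card_ord.
set k := #|_ :&: _|; set m := #|~: _| => unionI unionC.
apply: binomial_saving_bound yS; lia.
Qed.

Section BaseGraph.

Variables (n x y : nat).
Hypothesis lt_xyn : x + y < n.
Implicit Types (S : graph n) (u v : 'I_n).

Definition base_graph : graph n :=
  [set p : 'I_n * 'I_n | [&& p.1 < p.2, p.1 < n - y - 1 & x <= p.2]].

Lemma base_graph_counts S :
  S \subset base_graph -> x <= n_initial S /\ y < n_terminal S.
Proof.
move=> /subsetP sS; split.
  by apply: leq_n_initial => [|u v /sS]; [lia | rewrite inE => /and3P[]].
have -> : y.+1 = n - (n - y - 1) by lia.
by apply: leq_n_terminal => [|u v /sS]; [lia | rewrite inE => /and3P[]].
Qed.

Lemma reachable_base_subset S : S \subset base_graph -> reachable x y S.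
Proof.
have [k] := ubnP #|S|; elim: k S => // k IH S cardS sS.
have [->|[[u v] uvS]] := set_0Vmem S; first exact: reach_empty.
have sS' : S :\ (u, v) \subset base_graph := subset_trans (subsetDl _ _) sS.
have [_ yS'] := base_graph_counts sS'.
have [xS yS] := base_graph_counts sS.
rewrite -(setD1K uvS); apply: reach_step.
- by apply: IH sS'; rewrite (cardsD1 (u, v) S) uvS in cardS.
- by rewrite /is_xy_graph (gtn_eqF yS') andbF.
- rewrite /valid_addition setD1K // !inE eqxx xS (ltnW yS) !andbT.
  by have := subsetP sS _ uvS; rewrite inE => /and3P[].
Qed.

Lemma card_base_graph : 'C(n, 2) - 'C(x, 2) - 'C(y.+1, 2) <= #|base_graph|.
Proof.
set L := [set v : 'I_n | v < x]; set H := [set v : 'I_n | n - y - 1 <= v].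
have sub : pairs_in [set: 'I_n] :\: (pairs_in L :|: pairs_in H) \subset ends @: base_graph.
  apply/subsetP => A /setDP[/pairs_inT_sorted[u [v [uv ->]]]].
  have uv' : u != v by rewrite neq_ltn uv.
  rewrite !inE !subset_pair !inE cards2 uv' /= !andbT => notLH.
  by apply/imsetP; exists (u, v) => //; rewrite inE /= uv; lia.
apply: leq_trans (leq_imset_card ends _); apply: leq_trans (subset_leq_card sub).
rewrite cardsD card_pairs_in cardsT card_ord -subnDA leq_sub2l //.
apply: leq_trans (subset_leq_card (subsetIr _ _)) _.
rewrite cardsU !card_pairs_in card_ord_lt ?card_ord_ge; try lia.
by rewrite (_ : n - (n - y - 1) = y.+1) ?leq_subr //; lia.
Qed.

End BaseGraph.

Section Extremal.

Variables (n x y : nat) (a b : 'I_n).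
Hypotheses (x_pos : 0 < x) (lt_xyn : x + y < n).
Hypotheses (val_a : a = n - y - 1 :> nat) (val_b : b = n - y :> nat).

Definition extremal_graph : graph n := (a, b) |: base_graph n x y.

Lemma extremal_edgeP (u v : 'I_n) :
  reflect ((u = n - y - 1 :> nat /\ v = n - y :> nat) \/ [/\ u < v, u < n - y - 1 & x <= v])
          ((u, v) \in extremal_graph).
Proof.
rewrite in_setU1 inE xpair_eqE -!val_eqE /= val_a val_b.
apply: (iffP idP) => [/orP[/andP[/eqP uy /eqP vy] | /and3P[uv ua xv]] |
                     [[uy vy] | [uv ua xv]]].
- by left.
- by right.
- by rewrite uy vy !eqxx.
- by rewrite uv ua xv orbT.
Qed.

Lemma initials_extremal : initials extremal_graph = [set v : 'I_n | v < x].
Proof.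
apply/setP => v; rewrite !inE; apply/forallP/idP => [noin | vx u].
  pose z := Ordinal (leq_ltn_trans (leq0n v) (ltn_ord v)).
  rewrite ltnNge; apply: contra (noin z) => xv.
  by apply/extremal_edgeP; right; split => /=; lia.
by apply/extremal_edgeP => -[[_ vb] | [_ _ xv]]; lia.
Qed.

Lemma terminals_extremal : terminals extremal_graph = [set v : 'I_n | n - y <= v].
Proof.
apply/setP => v; rewrite !inE; apply/forallP/idP => [noout | yv w].
  rewrite leqNgt; apply: contra (noout b) => vy; apply/extremal_edgeP.
  by have [va | va] := eqVneq (v : nat) (n - y - 1); [left | right; split]; lia.
by apply/extremal_edgeP => -[[va _] | [_ va _]]; lia.
Qed.

Lemma extremal_xy : is_xy_graph x y extremal_graph.
Proof.
rewrite /is_xy_graph /n_initial /n_terminal.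
rewrite -/(initials _) -/(terminals _) initials_extremal terminals_extremal.
by rewrite card_ord_lt ?card_ord_ge; lia.
Qed.

Lemma extremal_edge_notin_base : (a, b) \notin base_graph n x y.
Proof. by rewrite inE /= val_a ltnn andbF. Qed.

Lemma reachable_extremal : reachable x y extremal_graph.
Proof.
have [_ yB] := base_graph_counts lt_xyn (subxx (base_graph n x y)).
have /andP[/eqP nI /eqP nT] := extremal_xy.
apply: reach_step; first exact: reachable_base_subset.
  by rewrite /is_xy_graph (gtn_eqF yB) andbF.
rewrite /valid_addition extremal_edge_notin_base -/extremal_graph nI nT !leqnn.
by rewrite val_a val_b; lia.
Qed.

Lemma card_extremal_graph : 'C(n, 2) + 1 - 'C(x, 2) - 'C(y.+1, 2) <= #|extremal_graph|.
Proof.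
by rewrite cardsU1 extremal_edge_notin_base; have := card_base_graph lt_xyn; lia.
Qed.

End Extremal.

Theorem mainTheorem13 (x y n : nat) :
  1 <= y -> y <= x -> x + y < n ->
  (exists E : graph n, produced x y E /\ is_xy_graph x y E /\
     #|E| = 'C(n, 2) + 1 - 'C(x, 2) - 'C(y.+1, 2)) /\
  (forall E : graph n, produced x y E -> is_xy_graph x y E ->
     #|E| <= 'C(n, 2) + 1 - 'C(x, 2) - 'C(y.+1, 2)).
Proof.
move=> y_pos le_yx lt_xyn.
have upper (E : graph n) : produced x y E -> is_xy_graph x y E ->
    #|E| <= 'C(n, 2) + 1 - 'C(x, 2) - 'C(y.+1, 2).
  by move=> [rE _]; apply: card_xy_graph_le rE.
split=> //.
have x_pos : 0 < x := leq_trans y_pos le_yx.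
have lt_a : n - y - 1 < n by lia.
have lt_b : n - y < n by lia.
pose G := extremal_graph x y (Ordinal lt_a) (Ordinal lt_b).
have xyG : is_xy_graph x y G by apply: extremal_xy.
have prodG : produced x y G by split; [apply: reachable_extremal | left].
exists G; split=> //; split=> //.
by apply/eqP; rewrite eqn_leq upper //= card_extremal_graph.
Qed.
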